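(* Let $$D=\{(t_1,\dots,t_n)\in\mathbb{R}^n_{>0}: t_1^2\leq t_2,\ t_j^2\leq t_{j-1}t_{j+1}\text{ for all } j=2,\dots,n-1\}$$ and let $f:\mathbb{R}^n_{>0}\to\mathbb{R}$ be $f(t_1,\dots,t_n)=\frac{1}{t_1}+\frac{t_1}{t_2}+\cdots+\frac{t_{n-1}}{t_n}$. Let $a=(a_1,\dots,a_n),b=(b_1,\dots,b_n)\in D$ with $a_i\leq b_i$ for all $i=1,\dots,n$. Then $f(a)\geq f(b)$, and equality holds if and only if $a=b$. *)

From mathcomp Require Import all_boot all_order all_algebra.
Set Implicit Arguments. Unset Strict Implicit. Unset Printing Implicit Defensive.
Import Order.TTheory GRing.Theory Num.Theory.
Local Open Scope ring_scope.

(* Points of R^n are functions t : 'I_n -> R; the paper's coordinate t_j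
   (1 <= j <= n) is t (inord (j-1)), i.e. index 0-based. *)
Section D.
Variable R : realFieldType.
Variable n : nat.

Definition coord (t : 'I_n -> R) (j : nat) : R :=
  match insub j.-1 with Some i => t i | None => 0 end.

Definition inD (t : 'I_n -> R) : Prop :=
  (forall i : 'I_n, 0 < t i) /\
  coord t 1 ^+ 2 <= coord t 2 /\
  (forall j : nat, (2 <= j)%N -> (j <= n.-1)%N ->
     coord t j ^+ 2 <= coord t j.-1 * coord t j.+1).

Definition fD (t : 'I_n -> R) : R :=
  1 / coord t 1 + \sum_(1 <= j < n) coord t j / coord t j.+1.
End D.

From Pilot Require Import Defs.
From mathcomp Require Import all_boot all_order all_algebra.
From mathcomp Require Import ring zify.
From Stdlib Require Import FunctionalExtensionality.

Set Implicit Arguments.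
Unset Strict Implicit.
Unset Printing Implicit Defensive.
Import Order.TTheory GRing.Theory Num.Theory.
Local Open Scope ring_scope.

(* With the convention t_0 = 1, write x_j = (b_{j+1}/b_j) / (a_{j+1}/a_j) and
   c_j = b_j/b_{j+1}.  Then f(a) - f(b) = sum_j c_j (x_j - 1).  The product
   x_0 ... x_{m-1} telescopes to b_m/a_m >= 1, so by AM-GM every partial sum of
   the x_j - 1 is nonnegative; the c_j decrease because b is log-concave, and
   Abel summation gives f(a) - f(b) >= c_{n-1} sum_j (x_j - 1) >= 0.  Equality
   forces equality in AM-GM, i.e. all x_j = 1, hence b_m = a_m for all m. *)

Lemma leif_AGM_prod_ge1 (R : realFieldType) (k : nat) (E : nat -> R) :
  (forall j, (j < k)%N -> 0 <= E j) -> 1 <= \prod_(j < k) E j ->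
  k%:R <= \sum_(j < k) E j ?= iff [forall j : 'I_k, E j == 1].
Proof.
case: k => [|k] E_ge0 prod_ge1.
  by rewrite big_ord0; split=> //; rewrite eqxx; apply/esym/forallP => -[].
set S := \sum_(j < k.+1) E j.
have k_gt0 : 0 < k.+1%:R :> R by rewrite ltr0n.
have in_ord (F : 'I_k.+1 -> R) op idx :
  \big[op/idx]_(j in 'I_k.+1) F j = \big[op/idx]_(j < k.+1) F j by apply: eq_bigl.
have := leif_AGM (A := 'I_k.+1) (fun j _ => E_ge0 j (ltn_ord j)).
rewrite card_ord !in_ord -/S => -[le_AGM eq_AGM].
have mean_ge1 : 1 <= S / k.+1%:R.
  rewrite leNgt; apply/negP => mean_lt1.
  have := le_trans prod_ge1 le_AGM.
  rewrite leNgt exprn_ilt1 // divr_ge0 ?ler0n // sumr_ge0 // => j _.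
  exact: E_ge0.
have le_kS : k.+1%:R <= S by move: mean_ge1; rewrite ler_pdivlMr // mul1r.
split=> //; apply/idP/idP => [/eqP Sk | /forallP E1]; last first.
  by rewrite /S (eq_bigr (fun=> 1)) => [|j _]; rewrite ?sumr_const ?card_ord ?(eqP (E1 j)).
have prod_eq : \prod_(j < k.+1) E j = (S / k.+1%:R) ^+ k.+1.
  by apply/eqP; rewrite eq_le le_AGM -Sk divff ?gt_eqF // expr1n.
move: eq_AGM; rewrite prod_eq eqxx => /esym /forall_inP all_eq.
have E_const (j : 'I_k.+1) : E j = E 0%N.
  by have /forall_inP/(_ ord0 isT)/eqP := all_eq j isT.
have S_const : S = E 0%N *+ k.+1.
  by rewrite /S (eq_bigr (fun=> E 0%N)) => [|j _]; rewrite ?sumr_const ?card_ord ?E_const.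
have E0 : E 0%N = 1.
  by apply: (mulIf (lt0r_neq0 k_gt0)); rewrite mul1r mulr_natr -S_const Sk.
by apply/forallP => j; rewrite E_const E0.
Qed.

Lemma ler_mul_sum_nonincr (R : numDomainType) (k : nat) (c y : nat -> R) :
  (forall j, (j.+1 < k)%N -> c j.+1 <= c j) ->
  (forall m, (m <= k)%N -> 0 <= \sum_(j < m) y j) ->
  c k.-1 * \sum_(j < k) y j <= \sum_(j < k) c j * y j.
Proof.
elim: k => [|k IH] c_nonincr sum_ge0; first by rewrite !big_ord0 mulr0.
rewrite !big_ord_recr /= mulrDr lerD2r.
apply: le_trans (IH (fun j jk => c_nonincr j (ltnW jk)) (fun m mk => sum_ge0 m (leqW mk))).
apply: ler_wpM2r; first exact: sum_ge0.
by case: k {IH} c_nonincr sum_ge0 => [|k] c_nonincr _; last exact: c_nonincr.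
Qed.

Lemma ratio_nonincr (R : realFieldType) (u v w : R) : 0 < u -> 0 < v -> 0 < w ->
  v ^+ 2 <= u * w -> v / w <= u / v.
Proof.
move=> u_gt0 v_gt0 w_gt0 uvw; rewrite -subr_ge0.
have -> : u / v - v / w = (u * w - v ^+ 2) / (v * w) by field; rewrite ?gt_eqF.
by rewrite divr_ge0 ?subr_ge0 // mulr_ge0 // ltW.
Qed.

Section Coordinates.
Variables (R : realFieldType) (n : nat).
Implicit Type t : 'I_n -> R.

(* The paper's convention t_0 = 1: then 1/t_1 is the j = 0 term of f and
   t_1^2 <= t_2 is the log-concavity condition at j = 1. *)
Definition coord1 t (j : nat) : R := if j is 0 then 1 else Defs.coord t j.

Lemma coord1_ord t (i : 'I_n) : coord1 t i.+1 = t i.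
Proof. by rewrite /coord1 /Defs.coord /= valK. Qed.

Lemma coord1_gt0 t : (forall i, 0 < t i) -> forall j, (j <= n)%N -> 0 < coord1 t j.
Proof. by move=> t_gt0 [|j] jn //; rewrite -[j]/(val (Ordinal jn)) coord1_ord. Qed.

Lemma fD_coord1 t : (0 < n)%N -> fD t = \sum_(j < n) coord1 t j / coord1 t j.+1.
Proof.
move=> n_gt0; rewrite /fD -(big_mkord xpredT (fun j => coord1 t j / coord1 t j.+1)).
rewrite big_ltn //=; congr (_ + _).
by apply: eq_big_nat => -[|j].
Qed.

Lemma inD_ratio_nonincr t : inD t -> forall j, (j.+2 <= n)%N ->
  coord1 t j.+1 / coord1 t j.+2 <= coord1 t j / coord1 t j.+1.
Proof.
case=> t_gt0 [t12 t_log_concave] j jn.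
apply: ratio_nonincr; try (apply: coord1_gt0 => //; lia).
case: j jn => [|j] jn; first by rewrite /coord1 mul1r.
by apply: t_log_concave; lia.
Qed.

End Coordinates.

Section Monotonicity.
Variables (R : realFieldType) (n : nat) (a b : 'I_n -> R).
Hypotheses (n_gt0 : (0 < n)%N) (Da : inD a) (Db : inD b).
Hypothesis le_ab : forall i, a i <= b i.

Let A := coord1 a.
Let B := coord1 b.
Let c j := B j / B j.+1.
Let ratio j := B j / A j.
Let x j := ratio j.+1 / ratio j.

Let A_gt0 j : (j <= n)%N -> 0 < A j.
Proof. by apply: coord1_gt0; case: Da. Qed.

Let B_gt0 j : (j <= n)%N -> 0 < B j.
Proof. by apply: coord1_gt0; case: Db. Qed.

Let ratio_gt0 j : (j <= n)%N -> 0 < ratio j.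
Proof. by move=> jn; rewrite divr_gt0 ?A_gt0 ?B_gt0. Qed.

Lemma prod_growth m : (m <= n)%N -> \prod_(j < m) x j = ratio m.
Proof.
elim: m => [|m IH] mn; first by rewrite big_ord0 /ratio /A /B /= divr1.
rewrite big_ord_recr IH ?(ltnW mn) // -[LHS]/(ratio m * x m).
by rewrite mulrC divfK // gt_eqF // ratio_gt0 // ltnW.
Qed.

Lemma growth_sum_ge m : (m <= n)%N ->
  m%:R <= \sum_(j < m) x j ?= iff [forall j : 'I_m, x j == 1].
Proof.
move=> mn; apply: leif_AGM_prod_ge1.
  by move=> j jm; rewrite ltW // divr_gt0 ?ratio_gt0 //; lia.
rewrite prod_growth // ler_pdivlMr ?A_gt0 // mul1r.
by case: m mn => [|m] mn //; rewrite -[m]/(val (Ordinal mn)) /A /B !coord1_ord le_ab.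
Qed.

Lemma fD_sub : fD a - fD b = \sum_(j < n) c j * (x j - 1).
Proof.
rewrite !fD_coord1 // -sumrB; apply: eq_bigr => j _.
have := A_gt0 (ltnW (ltn_ord j)); have := B_gt0 (ltnW (ltn_ord j)).
have := A_gt0 (ltn_ord j); have := B_gt0 (ltn_ord j).
by rewrite /c /x /ratio -/A -/B => *; field; rewrite ?gt_eqF.
Qed.

Let partial_sum_ge0 m : (m <= n)%N -> 0 <= \sum_(j < m) (x j - 1).
Proof.
by move=> mn; rewrite sumrB sumr_const card_ord subr_ge0 (growth_sum_ge mn).
Qed.

Let fD_sub_ge : c n.-1 * \sum_(j < n) (x j - 1) <= fD a - fD b.
Proof.
rewrite fD_sub; apply: (ler_mul_sum_nonincr (y := fun j => x j - 1)) => [j jn|m mn].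
  exact: inD_ratio_nonincr.
exact: partial_sum_ge0.
Qed.

Let c_last_gt0 : 0 < c n.-1.
Proof. by rewrite divr_gt0 ?B_gt0 //; case: (n) n_gt0. Qed.

Lemma fD_le : fD b <= fD a.
Proof.
rewrite -subr_ge0; apply: le_trans fD_sub_ge.
by rewrite mulr_ge0 ?(ltW c_last_gt0) ?partial_sum_ge0.
Qed.

Lemma fD_eq : fD a = fD b -> a = b.
Proof.
move=> f_eq.
have sum_eq0 : \sum_(j < n) (x j - 1) = 0.
  apply/eqP; rewrite eq_le partial_sum_ge0 // andbT -(pmulr_rle0 _ c_last_gt0).
  by have := fD_sub_ge; rewrite f_eq subrr.
have /forallP x1 : [forall j : 'I_n, x j == 1].
  rewrite -(eq_leif (growth_sum_ge (leqnn n))) eq_sym -subr_eq0.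
  by rewrite sumrB sumr_const card_ord in sum_eq0; rewrite sum_eq0.
apply: functional_extensionality => i.
have := prod_growth (ltn_ord i).
rewrite (eq_bigr (fun=> 1)) => [|j _]; last by apply/eqP/(x1 (widen_ord (ltn_ord i) j)).
rewrite big1_eq /ratio /A /B !coord1_ord => /esym /(congr1 (fun z => z * a i)).
by rewrite divfK ?mul1r // gt_eqF //; case: Da.
Qed.

End Monotonicity.

Theorem proposition3p3 (R : realFieldType) (n : nat) (hn : (2 <= n)%N)
  (a b : 'I_n -> R) (ha : inD a) (hb : inD b)
  (hab : forall i : 'I_n, a i <= b i) :
  fD b <= fD a /\ (fD a = fD b <-> a = b).
Proof.
have n_gt0 : (0 < n)%N by apply: leq_trans hn.
split; first exact: fD_le.
by split => [|-> //]; apply: fD_eq.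
Qed.
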